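(* Let $X$ be a compact metric countable space and $f:X\to X$ a continuous function such that $(X,f)$ is transitive. If there is $m\in\mathbb N$ such that $|\omega_f(x)|\le m$ for every accumulation point $x$ of $X$, then the Ellis semigroup $E(X,f)$ is countable.
   Context: $(X,f)$ is transitive if some point has dense orbit $\{f^n(x):n\in\mathbb N\}$. The Ellis semigroup $E(X,f)$ is the closure of $\{f^n:n\in\mathbb N\}$ in $X^X$ with the product (pointwise) topology. The $\omega$-limit set $\omega_f(x)$ is the set of $y$ with $f^{n_k}(x)\to y$ for some strictly increasing sequence $(n_k)$. An accumulation point is a non-isolated point. *)

From HB Require Import structures.
From mathcomp Require Import all_boot all_order all_algebra.
From mathcomp Require Import all_classical all_reals all_analysis.
Set Implicit Arguments. Unset Strict Implicit. Unset Printing Implicit Defensive.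
Import Order.TTheory GRing.Theory Num.Theory.
Local Open Scope classical_set_scope.

Definition orbit_of {X : Type} (f : X -> X) (x : X) : set X :=
  range (fun n : nat => iter n f x).

Definition transitive_sys {X : topologicalType} (f : X -> X) : Prop :=
  exists x : X, closure (orbit_of f x) = [set: X].

Definition omega_limit {X : topologicalType} (f : X -> X) (x : X) : set X :=
  [set y | exists n : nat -> nat,
     {homo n : a b / (a < b)%N} /\ ((fun k => iter (n k) f x) @ \oo --> y)].

Definition ellis_semigroup {X : topologicalType} (f : X -> X) : set {ptws X -> X} :=
  closure (range (fun n : nat => (iter n f : {ptws X -> X}))).

From HB Require Import structures.
From mathcomp Require Import all_boot all_order all_algebra.
From mathcomp Require Import all_classical all_reals all_analysis.
Import Order.TTheory GRing.Theory Num.Theory.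
Local Open Scope classical_set_scope.
Local Open Scope card_scope.

(* Let L = m!.  At an accumulation point x the omega-limit set is finite,
   f-invariant and has at most m points, so f^L is idempotent on it; hence the
   sequence k |-> f^(kL+r)(x) has a cluster point fixed by f^L, and as its
   cluster points are isolated in the finite set omega(x), it converges.
   An element p of E(X,f) which is not a power of f is a limit of powers f^n
   with n -> oo, some residue r modulo L occurring arbitrarily late; this forces
   p(x) = lim_k f^(kL+r)(x) at every accumulation point x.  The isolated points
   lie on the dense orbit of a transitive point x0 and p commutes with f, so
   there p is determined by p(x0).  Thus E(X,f) is covered by the powers of f
   and by at most one element for each pair (p(x0), r) in the countable set
   X * nat. *)

Section iterates_in_small_invariant_set.
Context {T : Type} (f : T -> T) (S : set T) (m : nat).
Hypotheses (Sm : S #<= `I_m) (fS : forall s, S s -> S (f s)).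

Lemma invariant_iter_collision c : S c ->
  exists i j, i < j <= m /\ iter i f c = iter j f c.
Proof.
move=> Sc; apply: contrapT => noc.
have Sfc : (fun i => iter i f c) @` `I_m.+1 `<=` S.
  by move=> _ [i _ <-]; elim: i => //= i; exact: fS.
have injfc : {in `I_m.+1 &, injective (fun i => iter i f c)}.
  move=> i j; rewrite !inE /= => im jm fij; apply: contrapT => /eqP.
  rewrite neq_ltn => /orP[ij | ji]; apply: noc; [exists i, j | exists j, i].
    by rewrite ij -ltnS.
  by rewrite ji -ltnS.
have : `I_m.+1 #<= `I_m.
  rewrite -(card_le_eql (inj_card_eq injfc)).
  exact: card_le_trans (subset_card_le Sfc) Sm.
by rewrite card_le_II ltnn.
Qed.

Lemma iter_fact_idempotent c : S c -> iter (m`! + m`!) f c = iter m`! f c.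
Proof.
move=> Sc; have [i [j [/andP[ij jm] fij]]] := invariant_iter_collision c Sc.
have period t : i <= t -> iter (t + (j - i)) f c = iter t f c.
  by move=> it; rewrite -(subnK it) -addnA subnKC 1?ltnW // !iterD fij.
have periods t k : i <= t -> iter (t + k * (j - i)) f c = iter t f c.
  move=> it; elim: k => [|k IHk]; first by rewrite addn0.
  by rewrite mulSn (addnC (j - i)) addnA period ?IHk // (leq_trans it) ?leq_addr.
have dvd_fact : j - i %| m`!.
  by rewrite dvdn_fact // subn_gt0 ij (leq_trans (leq_subr _ _)).
rewrite -{2}(divnK dvd_fact) periods //.
by rewrite (leq_trans (ltnW ij)) // (leq_trans jm) // fact_geq.
Qed.

End iterates_in_small_invariant_set.

Section cluster_seq.
Context {T : topologicalType}.
Implicit Types (u : nat -> T) (phi : nat -> nat).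

Lemma cluster_seq_frequently {u y V} :
  cluster (u @ \oo) y -> nbhs y V -> forall N, exists2 k, N <= k & V (u k).
Proof.
move=> yu Vy N; have uN : (u @ \oo) (u @` [set k | N <= k]).
  by exists N => // k Nk; exists k.
by have [_ [[k Nk <-] Vuk]] := yu _ _ uN Vy; exists k.
Qed.

Lemma cluster_subseq u phi :
  phi @ \oo --> \oo -> cluster ((u \o phi) @ \oo) `<=` cluster (u @ \oo).
Proof. by move=> phioo; exact: (cvg_cluster (cvg_app u phioo)). Qed.

Lemma compact_cluster_seq u : compact [set: T] -> exists y, cluster (u @ \oo) y.
Proof. by move=> /(_ (u @ \oo) _ filterT) [y [_ yu]]; exists y. Qed.

Lemma frequently_cluster_closure u (A : set T) :
  compact [set: T] -> (forall N, exists2 k, N <= k & A (u k)) ->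
  exists z, cluster (u @ \oo) z /\ closure A z.
Proof.
move=> cT uA.
have [phi phiP] : {phi & forall N, N <= phi N /\ A (u (phi N))}.
  apply: (@choice _ _ (fun N k => N <= k /\ A (u k))) => N.
  by have [k ? ?] := uA N; exists k.
have [z zu] := compact_cluster_seq (u \o phi) cT.
exists z; split.
  apply: cluster_subseq zu => B [N _ NB]; exists N => // k /= Nk.
  exact/NB/(leq_trans Nk (phiP k).1).
by move: zu; rewrite clusterE; apply; exists 0 => // k _; exact: (phiP k).2.
Qed.

Lemma cluster_recurrence (g : T -> T) u y :
  continuous g -> (forall k, u k.+1 = g (u k)) ->
  cluster (u @ \oo) y -> cluster (u @ \oo) (g y).
Proof.
move=> cg ug yu; apply: (@cluster_subseq _ S (cvg_addnl 1)).
move=> A B uA gyB.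
have uA' : \forall k \near \oo, A (g (u k)).
  by move: uA; rewrite /fmap /=; apply: filterS => k; rewrite /= ug.
by have [z [Az Bz]] := yu (g @^-1` A) _ uA' (cg y B gyB); exists (g z).
Qed.

End cluster_seq.

Lemma finite_isolating_nbhs {T : topologicalType} (S : set T) (y : T) :
  accessible_space T -> finite_set S -> exists2 W, nbhs y W & S `&` W `<=` [set y].
Proof.
move=> aT fS; have cS : closed (S `\ y).
  by apply: (accessible_finite_set_closed.1 aT); exact: finite_setD.
exists (~` (S `\ y)).
  by apply: open_nbhs_nbhs; split; [rewrite openC | move=> [_]; apply].
by move=> z [Sz Wz]; apply: contrapT => zy; apply: Wz.
Qed.

Lemma cvg_recurrence_fixed_cluster {T : topologicalType} (g : T -> T)
    (u : nat -> T) (S : set T) (y : T) :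
  hausdorff_space T -> compact [set: T] -> continuous g ->
  (forall k, u k.+1 = g (u k)) -> finite_set S -> cluster (u @ \oo) `<=` S ->
  cluster (u @ \oo) y -> g y = y -> u @ \oo --> y.
Proof.
move=> hT cT cg ug fS uS yu gy D Dy; apply: contrapT => uD.
have [W Wy SWy] := @finite_isolating_nbhs _ S y (hausdorff_accessible hT) fS.
have [B By BWD] := compact_regular hT cT filterT (filterI Wy Dy).
pose V := (B `&` g @^-1` B)°.
have Vy : nbhs y V.
  by apply/nbhs_interior/filterI => //; apply: cg; rewrite gy.
(* As [g] maps [V] into [B], once in [V] the sequence can only leave [B]
   through [B `\` V]. *)
have uBV : forall N, exists2 k, N <= k & (B `\` V) (u k).
  move=> N; apply: contrapT => noBV.
  have [k1 Nk1 Vk1] := cluster_seq_frequently yu Vy N.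
  have stayV : forall k, k1 <= k -> V (u k).
    elim=> [|k IHk]; first by rewrite leqn0 => /eqP <-.
    rewrite leq_eqVlt => /orP[/eqP <- //| k1k]; apply: contrapT => notV.
    apply: noBV; exists k.+1; first exact: leq_trans Nk1 (ltnW k1k).
    split => //; rewrite ug.
    by have [_ +] := interior_subset (IHk k1k).
  apply: uD; exists k1 => // k /= k1k.
  have [+ _] := interior_subset (stayV k k1k).
  by move=> /subset_closure /BWD [].
have [z [zu BVz]] := frequently_cluster_closure u _ cT uBV.
have zy : z = y.
  apply: SWy; split; first exact: uS.
  by apply: (BWD z (closureS _ BVz)).1 => w [].
by move: Vy; rewrite -zy => /BVz [w [[_ nVw] Vw]].
Qed.

Lemma nbhs_ptws_eval {U : eqType} {V : topologicalType} {p : {ptws U -> V}} {x A} :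
  nbhs (p x) A -> nbhs p [set q : {ptws U -> V} | A (q x)].
Proof. exact: proj_continuous. Qed.

Lemma hausdorff_disjoint_nbhs {T : topologicalType} {a b : T} :
  hausdorff_space T -> a <> b ->
  exists2 A, nbhs a A & exists2 B, nbhs b B & A `&` B `<=` set0.
Proof.
move=> hT ab; apply: contrapT => nAB; apply/ab/hT => A B Aa Bb.
apply: contrapT => AB0; apply: nAB; exists A => //; exists B => // z ABz.
by apply: AB0; exists z.
Qed.

Lemma nonlimit_point_in_orbit {T : topologicalType} (f : T -> T) {x0 x} :
  closure (orbit_of f x0) = [set: T] -> ~ limit_point [set: T] x ->
  exists k, x = iter k f x0.
Proof.
move=> x0_dense /existsNP [U] /not_implyP [Ux] /forallNP Ux1.
have /(_ U Ux) [_ [[k _ <-] Uk]] : closure (orbit_of f x0) x by rewrite x0_dense.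
exists k; apply: contrapT => kx; apply: (Ux1 (iter k f x0)); split => //.
exact/eqP/nesym.
Qed.

Lemma continuous_iter {T : topologicalType} {f : T -> T} :
  continuous f -> forall n, continuous (iter n f).
Proof.
move=> cf; elim => [|n IHn] x /=; first exact: cvg_id.
exact: continuous_comp (IHn x) (cf _).
Qed.

Lemma omega_limit_invariant {T : topologicalType} (f : T -> T) x z :
  continuous f -> omega_limit f x z -> omega_limit f x (f z).
Proof.
move=> cf [n [ninc nz]]; exists (fun k => (n k).+1); split.
  by move=> a b ab; rewrite ltnS ninc.
exact: continuous_cvg _ (cf z) nz.
Qed.

Lemma cluster_cvg_subseq {R : realType} {X : pseudoMetricType R} (u : nat -> X) z :
  cluster (u @ \oo) z ->
  exists2 phi : nat -> nat, {homo phi : a b / a < b} & (u \o phi) @ \oo --> z.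
Proof.
move=> zu.
have [pick pickP] : {pick : nat * nat -> nat & forall jN,
    jN.2 <= pick jN /\ ball z jN.1.+1%:R^-1 (u (pick jN))}.
  apply: (@choice _ _ (fun jN k => jN.2 <= k /\ ball z jN.1.+1%:R^-1 (u k))).
  move=> [j N]; have zj : nbhs z (ball z j.+1%:R^-1).
    by apply: nbhsx_ballx; rewrite invr_gt0 ltr0n.
  by have [k Nk zk] := cluster_seq_frequently zu zj N; exists k.
pose phi := fix phi j := pick (j, if j is j'.+1 then (phi j').+1 else 0).
have phiz j : ball z j.+1%:R^-1 (u (phi j)) by case: j => [|j]; exact: (pickP (_, _)).2.
exists phi.
  by apply: homo_ltn => [? ? ?|j]; [exact: ltn_trans | exact: (pickP (j.+1, _)).1].
apply/cvg_ballP => e e0; have [J _ Je] := near_infty_natSinv_lt (PosNum e0).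
by exists J => // j /= Jj; apply: le_ball (phiz j); exact/ltW/Je.
Qed.

Lemma cluster_iter_omega_limit {R : realType} {X : pseudoMetricType R}
    (f : X -> X) x L r :
  0 < L -> cluster ((fun k => iter (k * L + r) f x) @ \oo) `<=` omega_limit f x.
Proof.
move=> L0 z /cluster_cvg_subseq [phi phiinc phiz].
exists (fun k => phi k * L + r); split => //.
by move=> a b ab; rewrite ltn_add2r ltn_pmul2r // phiinc.
Qed.

Lemma iter_residue_cvg {R : realType} {X : pseudoMetricType R} (f : X -> X) m x r :
  hausdorff_space X -> compact [set: X] -> continuous f -> omega_limit f x #<= `I_m ->
  exists y : X, (fun k => iter (k * m`! + r) f x) @ \oo --> y.
Proof.
move=> hX cX cf om; pose u : nat -> X := fun k => iter (k * m`! + r) f x.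
have cfm : continuous (iter m`! f) := continuous_iter cf m`!.
have uS k : u k.+1 = iter m`! f (u k) by rewrite /u mulSn -addnA iterD.
have uom : cluster (u @ \oo) `<=` omega_limit f x.
  exact: cluster_iter_omega_limit (fact_gt0 m).
have [y0 y0u] := compact_cluster_seq u cX.
exists (iter m`! f y0).
apply: (cvg_recurrence_fixed_cluster _ _ _ _ hX cX cfm uS _ uom).
- exact: card_le_finite om (finite_II m).
- exact: cluster_recurrence cfm uS y0u.
- rewrite -iterD; apply: iter_fact_idempotent om _ _ (uom _ y0u).
  by move=> s; exact: omega_limit_invariant.
Qed.

Section ellis_semigroup.
Context {X : topologicalType} (f : X -> X).
Hypothesis hX : hausdorff_space X.

Lemma ellis_iter_commute p x k :
  continuous f -> ellis_semigroup f p -> p (iter k f x) = iter k f (p x).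
Proof.
move=> cf Ep; apply: contrapT => /(hausdorff_disjoint_nbhs hX) [A Ap [B Bk AB]].
have /(Ep _)[_ [[n _ <-] [An Bn]]] :
    nbhs p ([set q : {ptws X -> X} | A (q (iter k f x))]
            `&` [set q : {ptws X -> X} | (iter k f @^-1` B) (q x)]).
  by apply: filterI; apply: nbhs_ptws_eval => //; exact: continuous_iter.
by apply: (AB (iter n f (iter k f x))); split; rewrite // -iterD addnC iterD.
Qed.

Lemma ellis_nonpower_frequently p :
  ellis_semigroup f p -> (forall n, p <> iter n f) ->
  forall N W, nbhs p W -> exists2 n, N <= n & W (iter n f).
Proof.
move=> Ep np; elim=> [W /Ep [_ [[n _ <-] Wn]]|N IHN W Wp]; first by exists n.
have [x pNx] : exists x, p x <> iter N f x.
  apply: contrapT => pN; apply: (np N); apply: funext => x.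
  by apply: contrapT => pNx; apply: pN; exists x.
have [A Ap [B BN AB]] := hausdorff_disjoint_nbhs hX pNx.
have [n Nn [Wn An]] := IHN _ (filterI Wp (nbhs_ptws_eval Ap)).
exists n => //; rewrite ltn_neqAle Nn andbT; apply/eqP => Nn'.
by apply: (AB (iter n f x)); split; rewrite // -Nn'; exact: nbhs_singleton.
Qed.

Definition residue_limit (L r : nat) (p : X -> X) :=
  forall x, limit_point [set: X] x -> (fun k => iter (k * L + r) f x) @ \oo --> p x.

Lemma residue_cvg_excludes (p : {ptws X -> X}) L r x y : 0 < L ->
  (fun k => iter (k * L + r) f x) @ \oo --> y -> p x <> y ->
  exists N, \forall q \near p, forall n, N <= n -> n %% L = r -> q <> iter n f.
Proof.
move=> L0 xy /(hausdorff_disjoint_nbhs hX) [A Ap [B By AB]].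
have [K _ KB] := xy B By.
exists (K * L); apply: filterS (nbhs_ptws_eval Ap) => q Aq n KLn nr qn.
apply: (AB (q x)); split => //; rewrite qn (divn_eq n L) nr.
by apply: KB; rewrite /= leq_divRL.
Qed.

Lemma ellis_nonpower_residue p L : 0 < L ->
  ellis_semigroup f p -> (forall n, p <> iter n f) ->
  (forall x r, limit_point [set: X] x ->
     exists y : X, (fun k => iter (k * L + r) f x) @ \oo --> y) ->
  exists r, residue_limit L r p.
Proof.
move=> L0 Ep np cvgL; apply: contrapT => nores.
have excl (r : 'I_L) : exists N, \forall q \near p,
    forall n, N <= n -> n %% L = r -> q <> iter n f.
  have [x [x_lim x_ncvg]] : exists x, limit_point [set: X] x /\
      ~ (fun k => iter (k * L + r) f x) @ \oo --> p x.
    apply: contrapT => rcvg; apply: nores; exists r => x x_lim.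
    by apply: contrapT => x_ncvg; apply: rcvg; exists x.
  have [y xy] := cvgL x r x_lim.
  by apply: (residue_cvg_excludes _ _ _ _ _ L0 xy) => pxy; apply: x_ncvg; rewrite pxy.
have [N pN] := fin_all_exists excl.
have [n Nn Wn] := ellis_nonpower_frequently p Ep np (\max_r N r) _
  (filter_forall (nbhs_filter p) pN).
apply: (Wn (Ordinal (ltn_pmod n L0)) n _ _ erefl) => //.
exact: leq_trans (leq_bigmax _) Nn.
Qed.

Lemma ellis_residue_limit_unique x0 L r (p q : {ptws X -> X}) :
  continuous f -> closure (orbit_of f x0) = [set: X] ->
  ellis_semigroup f p -> ellis_semigroup f q -> p x0 = q x0 ->
  residue_limit L r p -> residue_limit L r q -> p = q.
Proof.
move=> cf x0_dense Ep Eq pq0 pr qr; apply: funext => x.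
have [x_lim|x_nlim] := pselect (limit_point [set: X] x).
  exact: (cvg_unique hX (pr x x_lim) (qr x x_lim)).
have [k ->] := nonlimit_point_in_orbit f x0_dense x_nlim.
by rewrite !ellis_iter_commute // pq0.
Qed.

End ellis_semigroup.

Lemma countableU T (A B : set T) : countable A -> countable B -> countable (A `|` B).
Proof. by move=> cA cB; rewrite -bigcup2E; apply: bigcup_countable => // -[|[|i]]. Qed.

Lemma is_subset1_countable T (A : set T) : is_subset1 A -> countable A.
Proof.
move=> A1; have [->|/set0P[a Aa]] := eqVneq A set0; first exact: countable0.
by apply: sub_countable (countable1 a); apply: subset_card_le => b Ab; exact: A1.
Qed.

Theorem theorem4p4 (R : realType) (X : pseudoMetricType R) (f : X -> X) (m : nat) :
  hausdorff_space X ->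
  compact [set: X] ->
  countable [set: X] ->
  continuous f ->
  transitive_sys f ->
  (forall x : X, limit_point [set: X] x -> omega_limit f x #<= `I_m) ->
  countable (ellis_semigroup f).
Proof.
move=> hX cX cntX cf [x0 x0_dense] om.
pose C (yr : X * nat) := [set p : {ptws X -> X} |
  [/\ ellis_semigroup f p, p x0 = yr.1 & residue_limit f m`! yr.2 p]].
have EC : ellis_semigroup f `<=`
    range (fun n => iter n f : {ptws X -> X}) `|` \bigcup_(yr in [set: X * nat]) C yr.
  move=> p Ep; have [[n ->]|/forallNP np] := pselect (exists n, p = iter n f).
    by left; exists n.
  have [|r pr] := ellis_nonpower_residue f hX p _ (fact_gt0 m) Ep np.
    by move=> x r x_lim; exact: iter_residue_cvg hX cX cf (om x x_lim).
  by right; exists (p x0, r).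
apply: sub_countable (subset_card_le EC) _; apply: countableU.
  exact: sub_countable (card_image_le _ _) (countableP _).
apply: bigcup_countable => [|[y r] _]; first by rewrite -setXTT; exact: countableX.
apply: is_subset1_countable => p q [Ep p0 pr] [Eq q0 qr].
apply: (ellis_residue_limit_unique f hX _ _ _ _ _ cf x0_dense Ep Eq _ pr qr).
by rewrite p0 q0.
Qed.
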